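(* Let $\varepsilon>0$ and let $(G,\mathcal P,\mathcal I,k)$ be an instance of $\mathrm{BAL}(\mu,\nu)$ with $k\ge2\nu/\varepsilon$. Let $(G',\mathcal P,\mathcal I',k)$ be the transformed instance obtained by adding a new isolated node $v$ to $G$ and adding $v$ to $I_i$ for every $i\in[\nu]$. Let $\Phi'$ be the objective of the transformed instance and $\mathcal S'$ a solution of it with $\Phi'(\mathcal S')\ge\alpha\,\Phi'(\mathcal S'^* )$, where $\mathcal S'^*$ is an optimal solution for maximizing $\Phi'$. Then $\mathcal S=\mathcal S'\setminus\{v\}$ (removing $v$ from every set) satisfies $\Phi(\mathcal S)\ge(\alpha-\varepsilon)\Phi(\mathcal S^* )$, where $\mathcal S^*$ is an optimal solution for maximizing $\Phi$ in the original instance.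
   Context: Triggering model: for a directed graph $G=(V,E)$ and $p:E\to[0,1]$, an outcome $X=(T_v)_{v\in V}$ is obtained by having each node $v$ independently choose a subset $T_v$ of its in-neighbours $N_v$, with $T_v=S$ with probability $\prod_{u\in S}p_{uv}\prod_{u\in N_v\setminus S}(1-p_{uv})$; $\rho_X(A)$ is the set of nodes reachable from $A\subseteq V$ via arcs $\{(u,v):u\in T_v\}$. $\mathrm{BAL}(\mu,\nu)$ for integer constants $\mu\ge\nu\ge2$: instance = directed graph $G=(V,E)$, probability functions $\mathcal P=(p_1,\dots,p_\mu)$ on $E$, seed sets $\mathcal I=(I_1,\dots,I_\mu)$, budget $k\ge2$; standing assumptions $\nu\le k\le\nu|V|$, $|V|\ge\mu$. A solution is $\mathcal S=(S_1,\dots,S_\mu)$, $S_i\subseteq V$, $\sum_i|S_i|\le k$. An outcome profile $(X_1,\dots,X_\mu)$ consists of outcomes $X_i$ w.r.t. $p_i$ (independent in the heterogeneous setting; identical in the correlated setting). $\Phi(\mathcal S)$ is the expected number of nodes lying in none or in at least $\nu$ of the sets $\rho_{X_i}(I_i\cup S_i)$. *)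

From HB Require Import structures.
From mathcomp Require Import all_boot all_order all_algebra.
Set Implicit Arguments. Unset Strict Implicit. Unset Printing Implicit Defensive.
Import Order.TTheory GRing.Theory Num.Theory.
Local Open Scope ring_scope.

(* A directed graph is a relation E : rel V on a finite type V (arc u -> v iff E u v).
   A probability function on E is p : V -> V -> R, only its values on arcs matter. *)

Definition inN (V : finType) (E : rel V) (v : V) : {set V} := [set u | E u v].

(* An outcome X = (T_v)_v is a finite function V -> {set V};
   its probability w.r.t. p (0 unless T_v is a subset of N_v). *)
Definition outcome_prob (R : ringType) (V : finType) (E : rel V) (p : V -> V -> R)
  (X : {ffun V -> {set V}}) : R :=
  \prod_(v : V)
    (if X v \subset inN E v then
       \prod_(u in inN E v) (if u \in X v then p u v else 1 - p u v)
     else 0).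

Definition reach (V : finType) (X : {ffun V -> {set V}}) (A : {set V}) : {set V} :=
  [set w | [exists a in A, connect (fun x y => x \in X y) a w]].

Definition balanced_count (V : finType) (mu nu : nat)
  (Xs : 'I_mu -> {ffun V -> {set V}}) (I S : 'I_mu -> {set V}) : nat :=
  #|[set w : V | let c := #|[set i : 'I_mu | w \in reach (Xs i) (I i :|: S i)]| in
                 (c == 0)%N || (nu <= c)%N]|.

Inductive setting := Heterogeneous | Correlated.

(* p_1, the first probability function (dummy if mu = 0) *)
Definition p_first (R : ringType) (V : finType) (mu : nat) : ('I_mu -> V -> V -> R) -> V -> V -> R :=
  match mu return ('I_mu -> V -> V -> R) -> V -> V -> R with
  | 0 => fun _ _ _ => 0
  | m.+1 => fun P => P ord0
  end.

(* The objective Phi(S) = expected balanced count.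
   Heterogeneous: independent outcomes X_i w.r.t. p_i.
   Correlated: one common outcome X (w.r.t. the common probability function p_1). *)
Definition Phi (R : ringType) (V : finType) (E : rel V) (mu nu : nat) (s : setting)
  (P : 'I_mu -> V -> V -> R) (I S : 'I_mu -> {set V}) : R :=
  match s with
  | Heterogeneous =>
      \sum_(Xs : {ffun 'I_mu -> {ffun V -> {set V}}})
         (\prod_(i : 'I_mu) outcome_prob E (P i) (Xs i)) * (balanced_count nu Xs I S)%:R
  | Correlated =>
      \sum_(X : {ffun V -> {set V}})
         outcome_prob E (p_first P) X * (balanced_count nu (fun _ => X) I S)%:R
  end.

Definition feasible (V : finType) (mu k : nat) (S : 'I_mu -> {set V}) : bool :=
  (\sum_(i : 'I_mu) #|S i| <= k)%N.

(* The transformed instance: V' = option V, the new isolated node v is None. *)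
Definition ext_rel (V : finType) (E : rel V) : rel (option V) :=
  fun a b => match a, b with Some x, Some y => E x y | _, _ => false end.

Definition ext_prob (R : ringType) (V : finType) (mu : nat) (P : 'I_mu -> V -> V -> R)
  : 'I_mu -> option V -> option V -> R :=
  fun i a b => match a, b with Some x, Some y => P i x y | _, _ => 0 end.

(* I'_i = I_i U {v} for i in [nu] (i.e. 0-based index i < nu), I'_i = I_i otherwise *)
Definition ext_seeds (V : finType) (mu nu : nat) (I : 'I_mu -> {set V})
  : 'I_mu -> {set option V} :=
  fun i => (if (i < nu)%N then [set None] else set0) :|: (Some @: I i).

Definition remove_new (V : finType) (mu : nat) (S' : 'I_mu -> {set option V})
  : 'I_mu -> {set V} :=
  fun i => [set x | Some x \in S' i].

From HB Require Import structures.
From mathcomp Require Import all_boot all_order all_algebra.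
From mathcomp Require Import lra zify.
From Stdlib Require Import FunctionalExtensionality.
Import Order.TTheory GRing.Theory Num.Theory.
Set Implicit Arguments. Unset Strict Implicit. Unset Printing Implicit Defensive.
Local Open Scope ring_scope.

(** The new node [v] is isolated and seeded in the first [nu] campaigns, so in
    every outcome profile it is reached by at least [nu] campaigns and counts as
    balanced; everything else is unaffected by [v].  Hence
    [Phi'(T) = Phi(T \ {v}) + M], with [M] the total probability mass.  Putting
    the same [k %/ nu] nodes into the first [nu] sets gives a feasible solution
    in which every chosen node is balanced, so [Phi(Sopt) >= (k %/ nu) M >= M/eps].
    An [alpha]-approximation of [Phi'] therefore loses at most [M <= eps Phi(Sopt)]
    on [Phi]. *)

Lemma big_option (R : Type) (idx : R) (op : Monoid.com_law idx) (V : finType)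
    (F : option V -> R) :
  \big[op/idx]_(o : option V) F o = op (F None) (\big[op/idx]_(v : V) F (Some v)).
Proof.
rewrite (bigD1 None) //=; congr (op _ _).
rewrite (reindex_omap Some id) /=; last by case.
by apply: eq_bigl => v; rewrite eqxx.
Qed.

Lemma big_inj_support (R : nzRingType) (A B : finType) (h : A -> B) (F : B -> R) :
  injective h -> (forall b, F b != 0 -> exists a, b = h a) ->
  \sum_b F b = \sum_a F (h a).
Proof.
move=> h_inj F_supp.
rewrite (bigID (mem (h @: setT))) /= [X in _ + X]big1 ?addr0; last first.
  move=> b hb; apply/eqP/negPn/negP => /F_supp [a def_b].
  by move: hb; rewrite def_b imset_f ?inE.
rewrite big_imset /=; last by move=> x y _ _; apply: h_inj.
by apply: eq_bigl => a; rewrite inE.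
Qed.

Lemma None_notin_Some_imset (V : finType) (A : {set V}) : (None \in Some @: A) = false.
Proof. by apply/imsetP => -[]. Qed.

Lemma mem_Some_imset (V : finType) (A : {set V}) x : (Some x \in Some @: A) = (x \in A).
Proof. by rewrite mem_imset //; apply: Some_inj. Qed.

Lemma Some_imset_subset (V : finType) (A B : {set V}) :
  (Some @: A \subset Some @: B) = (A \subset B).
Proof.
apply/idP/idP => [sub_AB|]; last exact: imsetS.
by apply/subsetP => x; rewrite -(mem_Some_imset A) -(mem_Some_imset B); apply: (subsetP sub_AB).
Qed.

Lemma inN_ext_None (V : finType) (E : rel V) : inN (ext_rel E) None = set0.
Proof. by apply/setP => u; rewrite !inE; case: u. Qed.

Lemma inN_ext_Some (V : finType) (E : rel V) v :
  inN (ext_rel E) (Some v) = Some @: inN E v.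
Proof.
by apply/setP => -[u|]; rewrite ?mem_Some_imset ?None_notin_Some_imset !inE.
Qed.

Definition lift_outcome (V : finType) (X : {ffun V -> {set V}})
  : {ffun option V -> {set option V}} :=
  [ffun o => if o is Some v then Some @: X v else set0].

Definition unlift_outcome (V : finType) (X' : {ffun option V -> {set option V}})
  : {ffun V -> {set V}} :=
  [ffun v => [set u | Some u \in X' (Some v)]].

Lemma lift_outcome_inj (V : finType) : injective (@lift_outcome V).
Proof.
move=> X Y /ffunP eqXY; apply/ffunP => v; apply/setP => u.
by have := eqXY (Some v); rewrite !ffunE => /setP /(_ (Some u)); rewrite !mem_Some_imset.
Qed.

(** Only lifted outcomes have positive probability: [None] has no in-neighbours
    and [Some v] has no in-neighbour [None]. *)
Lemma outcome_prob_ext_unlifted (R : comNzRingType) (V : finType) (E : rel V)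
    (p' : option V -> option V -> R) (X' : {ffun option V -> {set option V}}) :
  X' != lift_outcome (unlift_outcome X') -> outcome_prob (ext_rel E) p' X' = 0.
Proof.
case: (pickP (fun o => X' o != lift_outcome (unlift_outcome X') o)) => [o neq_o _|eqX'];
  last by move/eqP; case; apply/ffunP => o; apply/eqP/negbFE/eqX'.
rewrite /outcome_prob (bigD1 o) //=; case: ifP => [X'_sub|_]; last by rewrite mul0r.
case/negP: neq_o; rewrite ffunE; apply/eqP; case: o X'_sub => [v|] X'_sub.
  apply/setP => -[u|]; first by rewrite mem_Some_imset ffunE inE.
  rewrite None_notin_Some_imset; apply/negbTE/negP => /(subsetP X'_sub).
  by rewrite inE.
by apply/eqP; rewrite -subset0 -(inN_ext_None E).
Qed.

Lemma outcome_prob_ext_lift (R : comNzRingType) (V : finType) (E : rel V)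
    (p : V -> V -> R) (p' : option V -> option V -> R) (X : {ffun V -> {set V}}) :
  (forall x y, p' (Some x) (Some y) = p x y) ->
  outcome_prob (ext_rel E) p' (lift_outcome X) = outcome_prob E p X.
Proof.
move=> p'E; rewrite /outcome_prob big_option /= ffunE sub0set.
rewrite big_pred0 => [|u]; last by rewrite inN_ext_None inE.
rewrite mul1r; apply: eq_bigr => v _; rewrite ffunE inN_ext_Some Some_imset_subset.
case: ifP => // _; rewrite big_imset /=; last by move=> ? ? _ _ [].
by apply: eq_bigr => u _; rewrite mem_Some_imset p'E.
Qed.

Lemma connect_lift_outcome (V : finType) (X : {ffun V -> {set V}}) (x y : option V) :
  connect (fun a b => a \in lift_outcome X b) x y =
  match x, y with
  | None, None => true
  | Some a, Some w => connect (fun a b => a \in X b) a w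
  | _, _ => false
  end.
Proof.
apply/idP/idP.
  case/connectP => q q_path ->; elim: q x q_path => [|z q IHq] x /=.
    by case: x => // a; apply: connect0.
  case/andP => xz /IHq; rewrite ffunE in xz.
  case: z xz => [w|]; last by rewrite inE.
  case/imsetP => u u_in -> ; case: (last (Some w) q) => // t.
  by apply: connect_trans; apply: connect1.
case: x => [a|]; case: y => [w|] //=; rewrite ?connect0 //.
case/connectP => q q_path ->; elim: q a q_path => [|z q IHq] a /=; first by rewrite connect0.
case/andP => az /IHq; apply: connect_trans; apply: connect1.
by rewrite ffunE mem_Some_imset.
Qed.

Lemma reach_lift_outcome (V : finType) (X : {ffun V -> {set V}}) (A' : {set option V}) w :
  (Some w \in reach (lift_outcome X) A') = (w \in reach X [set a | Some a \in A']).
Proof.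
rewrite !inE; apply/existsP/existsP => -[a].
  by case: a => [a|] /andP[a_in]; rewrite connect_lift_outcome // => a_w;
    exists a; rewrite inE a_in.
by rewrite inE => /andP[a_in a_w]; exists (Some a); rewrite a_in connect_lift_outcome.
Qed.

Lemma reach_seed (V : finType) (X : {ffun V -> {set V}}) (A : {set V}) a :
  a \in A -> a \in reach X A.
Proof. by move=> a_in; rewrite inE; apply/existsP; exists a; rewrite a_in connect0. Qed.

Lemma card_option_set (V : finType) (Q : pred (option V)) :
  #|[set o | Q o]| = (Q None + #|[set w | Q (Some w)]|)%N.
Proof.
rewrite !cardsE -!sum1_card !big_mkcond big_option /=.
by rewrite [in RHS]big_mkcond /= !unfold_in /=; case: (Q None).
Qed.

Lemma card_ord_lt (n m : nat) : (m <= n)%N -> #|[set i : 'I_n | (i < m)%N]| = m.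
Proof.
move=> le_mn; have widen_inj : injective (widen_ord le_mn).
  by move=> i j /(congr1 val) /= /val_inj.
rewrite -[RHS]card_ord -(card_imset _ widen_inj).
apply: eq_card => i; rewrite inE; apply/idP/imsetP => [lt_im|[j _ ->]];
  last exact: (ltn_ord j).
by exists (Ordinal lt_im) => //; apply: val_inj.
Qed.

Lemma ext_seeds_Some (V : finType) (mu nu : nat) (I : 'I_mu -> {set V})
    (S' : 'I_mu -> {set option V}) i :
  [set a | Some a \in ext_seeds nu I i :|: S' i] = I i :|: remove_new S' i.
Proof. by apply/setP => a; rewrite !inE mem_Some_imset; case: (i < nu)%N; rewrite !inE. Qed.

Lemma balanced_count_ext (V : finType) (mu nu : nat) (Xs : 'I_mu -> {ffun V -> {set V}})
    (I : 'I_mu -> {set V}) (S' : 'I_mu -> {set option V}) :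
  (nu <= mu)%N ->
  balanced_count nu (fun i => lift_outcome (Xs i)) (ext_seeds nu I) S' =
  (balanced_count nu Xs I (remove_new S')).+1.
Proof.
move=> le_nu_mu; rewrite /balanced_count card_option_set /=.
have -> : (nu <= #|[set i | None \in reach (lift_outcome (Xs i))
                                              (ext_seeds nu I i :|: S' i)]|)%N.
  rewrite -{1}(card_ord_lt le_nu_mu); apply/subset_leq_card/subsetP => i.
  rewrite in_set => lt_i_nu; rewrite in_set; apply: reach_seed.
  by rewrite /ext_seeds lt_i_nu !inE eqxx.
rewrite orbT add1n; congr (_.+1); apply: eq_card => w; rewrite !inE.
suff -> : [set i | Some w \in reach (lift_outcome (Xs i)) (ext_seeds nu I i :|: S' i)] =
          [set i | w \in reach (Xs i) (I i :|: remove_new S' i)] by [].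
by apply/setP => i; rewrite [LHS]in_set [RHS]in_set reach_lift_outcome ext_seeds_Some.
Qed.

Definition expect (R : nzRingType) (V : finType) (E : rel V) (mu : nat) (s : setting)
    (P : 'I_mu -> V -> V -> R) (f : ('I_mu -> {ffun V -> {set V}}) -> R) : R :=
  match s with
  | Heterogeneous =>
      \sum_(Xs : {ffun 'I_mu -> {ffun V -> {set V}}})
         (\prod_(i : 'I_mu) outcome_prob E (P i) (Xs i)) * f Xs
  | Correlated =>
      \sum_(X : {ffun V -> {set V}}) outcome_prob E (p_first P) X * f (fun _ => X)
  end.

Lemma Phi_expect (R : nzRingType) (V : finType) (E : rel V) (mu nu : nat) (s : setting)
    (P : 'I_mu -> V -> V -> R) I S :
  Phi E nu s P I S = expect E s P (fun Xs => (balanced_count nu Xs I S)%:R).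
Proof. by case: s. Qed.

Lemma expectD (R : nzRingType) (V : finType) (E : rel V) (mu : nat) (s : setting)
    (P : 'I_mu -> V -> V -> R) f g :
  expect E s P (fun Xs => f Xs + g Xs) = expect E s P f + expect E s P g.
Proof. by case: s; rewrite /= -big_split /=; apply: eq_bigr => X _; rewrite mulrDr. Qed.

Lemma expect_cst (R : comNzRingType) (V : finType) (E : rel V) (mu : nat) (s : setting)
    (P : 'I_mu -> V -> V -> R) c :
  expect E s P (fun _ => c) = c * expect E s P (fun _ => 1).
Proof. by case: s; rewrite /= mulr_sumr; apply: eq_bigr => X _; rewrite mulr1 mulrC. Qed.

Lemma p_first_ext (R : nzRingType) (V : finType) (mu : nat) (P : 'I_mu -> V -> V -> R) x y :
  p_first (ext_prob P) (Some x) (Some y) = p_first P x y.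
Proof. by case: mu P. Qed.

Lemma expect_ext (R : comNzRingType) (V : finType) (E : rel V) (mu : nat) (s : setting)
    (P : 'I_mu -> V -> V -> R) (f : ('I_mu -> {ffun option V -> {set option V}}) -> R) :
  expect (ext_rel E) s (ext_prob P) f =
  expect E s P (fun Xs => f (fun i => lift_outcome (Xs i))).
Proof.
case: s => /=; last first.
  rewrite (big_inj_support (@lift_outcome_inj V)) => [|X' nz_X'].
    by apply: eq_bigr => X _; rewrite (outcome_prob_ext_lift _ _ (p_first_ext P)).
  exists (unlift_outcome X'); apply/eqP/negPn/negP => neq_X'.
  by move: nz_X'; rewrite outcome_prob_ext_unlifted // mul0r eqxx.
pose lift_profile (Xs : {ffun 'I_mu -> {ffun V -> {set V}}})
  : {ffun 'I_mu -> {ffun option V -> {set option V}}} := [ffun i => lift_outcome (Xs i)].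
have lift_profile_inj : injective lift_profile.
  move=> Xs Ys /ffunP eqXYs; apply/ffunP => i.
  by apply: lift_outcome_inj; have := eqXYs i; rewrite !ffunE.
rewrite (big_inj_support lift_profile_inj) => [|Xs' nz_Xs'].
  apply: eq_bigr => Xs _; congr (_ * _).
    by apply: eq_bigr => i _; rewrite ffunE (@outcome_prob_ext_lift _ _ _ (P i)).
  by congr f; apply: functional_extensionality => i; rewrite ffunE.
exists [ffun i => unlift_outcome (Xs' i)]; apply/ffunP => i; rewrite !ffunE.
apply/eqP/negPn/negP => neq_i; move: nz_Xs'.
by rewrite (bigD1 i) //= outcome_prob_ext_unlifted // !mul0r eqxx.
Qed.

Lemma Phi_ext (R : comNzRingType) (V : finType) (E : rel V) (mu nu : nat) (s : setting)
    (P : 'I_mu -> V -> V -> R) (I : 'I_mu -> {set V}) (T : 'I_mu -> {set option V}) :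
  (nu <= mu)%N ->
  Phi (ext_rel E) nu s (ext_prob P) (ext_seeds nu I) T =
  Phi E nu s P I (remove_new T) + expect E s P (fun _ => 1).
Proof.
move=> le_nu_mu; rewrite !Phi_expect expect_ext -expectD; congr (expect _ _ _ _).
by apply: functional_extensionality => Xs; rewrite balanced_count_ext // -addn1 natrD.
Qed.

Lemma remove_new_Some (V : finType) (mu : nat) (S : 'I_mu -> {set V}) :
  remove_new (fun i => Some @: S i) = S.
Proof.
by apply: functional_extensionality => i; apply/setP => x; rewrite inE mem_Some_imset.
Qed.

Lemma feasible_Some (V : finType) (mu k : nat) (S : 'I_mu -> {set V}) :
  feasible k (fun i => Some @: S i) = feasible k S.
Proof.
rewrite /feasible (eq_bigr (fun i => #|S i|)) // => i _.
by rewrite card_imset //; apply: Some_inj.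
Qed.

Section NonnegativeExpectation.

Variables (R : realFieldType) (V : finType) (E : rel V) (mu : nat) (s : setting).
Variable P : 'I_mu -> V -> V -> R.
Hypothesis P_prob : forall (i : 'I_mu) (u v : V), E u v -> 0 <= P i u v <= 1.

Lemma outcome_prob_ge0 (p : V -> V -> R) X :
  (forall u v, E u v -> 0 <= p u v <= 1) -> 0 <= outcome_prob E p X.
Proof.
move=> p_prob; apply: prodr_ge0 => v _; case: ifP => // _.
apply: prodr_ge0 => u; rewrite inE => /p_prob /andP[p_ge0 p_le1].
by case: ifP; rewrite ?subr_ge0.
Qed.

Lemma p_first_prob u v : E u v -> 0 <= p_first P u v <= 1.
Proof. by case: mu P P_prob => [|m] Q Q_prob /=; [rewrite lexx ler01 | apply: Q_prob]. Qed.

Lemma ler_expect f g : (forall Xs, f Xs <= g Xs) -> expect E s P f <= expect E s P g.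
Proof.
move=> le_fg; case: s => /=; apply: ler_sum => X _; apply: ler_wpM2l => //.
  by apply: prodr_ge0 => i _; apply: outcome_prob_ge0; apply: P_prob.
by apply: outcome_prob_ge0; apply: p_first_prob.
Qed.

Lemma expect_ge0 f : (forall Xs, 0 <= f Xs) -> 0 <= expect E s P f.
Proof.
by move=> f_ge0; rewrite -[0](mul0r (expect E s P (fun _ => 1))) -expect_cst ler_expect.
Qed.

Lemma Phi_ge0 nu I S : 0 <= Phi E nu s P I S.
Proof. by rewrite Phi_expect expect_ge0. Qed.

(** Every node of [W], placed in the first [nu] sets, is reached by at least
    [nu] campaigns in every outcome profile. *)
Lemma Phi_block_ge nu (I : 'I_mu -> {set V}) (W : {set V}) :
  (nu <= mu)%N ->
  #|W|%:R * expect E s P (fun _ => 1) <=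
  Phi E nu s P I (fun i => if (i < nu)%N then W else set0).
Proof.
move=> le_nu_mu; rewrite Phi_expect -expect_cst; apply: ler_expect => Xs.
rewrite ler_nat; apply/subset_leq_card/subsetP => w w_in; rewrite inE; apply/orP; right.
rewrite -{1}(card_ord_lt le_nu_mu); apply/subset_leq_card/subsetP => i.
rewrite in_set => lt_i_nu; rewrite in_set; apply: reach_seed.
by rewrite lt_i_nu !inE w_in orbT.
Qed.

End NonnegativeExpectation.

Lemma feasible_block (V : finType) (mu nu k : nat) (W : {set V}) :
  (nu <= mu)%N -> (#|W| <= k %/ nu)%N ->
  feasible k (fun i : 'I_mu => if (i < nu)%N then W else set0).
Proof.
move=> le_nu_mu le_W; rewrite /feasible.
rewrite (eq_bigr (fun i : 'I_mu => if (i < nu)%N then #|W| else 0%N)) => [|i _]; last first.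
  by case: ifP; rewrite ?cards0.
have card_lt_nu : #|[pred i : 'I_mu | (i < nu)%N]| = nu.
  by have := card_ord_lt le_nu_mu; rewrite cardsE.
rewrite -big_mkcond sum_nat_const /= card_lt_nu mulnC.
by apply: leq_trans (leq_mul le_W (leqnn nu)) _; rewrite leq_divM.
Qed.

Lemma exists_card_set (V : finType) (m : nat) :
  (m <= #|V|)%N -> exists W : {set V}, #|W| = m.
Proof.
move=> le_m; exists [set enum_val i | i in [set i : 'I_#|V| | (i < m)%N]].
by rewrite card_imset ?card_ord_lt //; apply: enum_val_inj.
Qed.

Lemma approx_shift_le (R : realFieldType) (alpha eps M m opt opt' val : R) :
  0 < eps -> 1 <= eps * m -> 0 <= M -> 0 <= val -> 0 <= opt ->
  m * M <= opt -> opt + M <= opt' -> alpha * opt' <= val + M ->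
  (alpha - eps) * opt <= val.
Proof.
move=> eps_gt0 eps_m M_ge0 val_ge0 opt_ge0 mM_le opt'_ge opt'_approx.
have [le_alpha_eps|lt_eps_alpha] := lerP alpha eps.
  by apply: le_trans val_ge0; rewrite mulr_le0_ge0 // subr_le0.
have alpha_ge0 : 0 <= alpha by apply: le_trans (ltW lt_eps_alpha); apply: ltW.
have : alpha * (opt + M) <= val + M by apply: le_trans opt'_approx; apply: ler_wpM2l.
have : eps * (m * M) <= eps * opt by apply: ler_wpM2l => //; apply: ltW.
have : M <= eps * m * M by rewrite -{1}(mul1r M); apply: ler_wpM2r.
nra.
Qed.

Theorem mainTheorem14 (R : realFieldType) (V : finType) (E : rel V) (mu nu : nat)
  (s : setting) (P : 'I_mu -> V -> V -> R) (I : 'I_mu -> {set V}) (k : nat)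
  (eps alpha : R) (S' Sopt' : 'I_mu -> {set option V}) (Sopt : 'I_mu -> {set V}) :
  (2 <= nu)%N -> (nu <= mu)%N -> (2 <= k)%N -> (nu <= k)%N -> (k <= nu * #|V|)%N ->
  (mu <= #|V|)%N ->
  (forall (i : 'I_mu) (u v : V), E u v -> 0 <= P i u v <= 1) ->
  (s = Correlated -> forall i j : 'I_mu, P i = P j) ->
  0 < eps -> 2 * nu%:R / eps <= k%:R ->
  (* S'* : an optimal solution of the transformed instance *)
  feasible k Sopt' ->
  (forall T : 'I_mu -> {set option V}, feasible k T ->
     Phi (ext_rel E) nu s (ext_prob P) (ext_seeds nu I) T
     <= Phi (ext_rel E) nu s (ext_prob P) (ext_seeds nu I) Sopt') ->
  (* S' : an alpha-approximate solution of the transformed instance *)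
  feasible k S' ->
  alpha * Phi (ext_rel E) nu s (ext_prob P) (ext_seeds nu I) Sopt'
    <= Phi (ext_rel E) nu s (ext_prob P) (ext_seeds nu I) S' ->
  (* S* : an optimal solution of the original instance *)
  feasible k Sopt ->
  (forall T : 'I_mu -> {set V}, feasible k T -> Phi E nu s P I T <= Phi E nu s P I Sopt) ->
  (alpha - eps) * Phi E nu s P I Sopt <= Phi E nu s P I (remove_new S').
Proof.
move=> le2nu le_nu_mu _ le_nu_k le_k_V _ P_prob _ eps_gt0 eps_k _ Sopt'_opt _ S'_approx
  Sopt_feasible Sopt_opt.
set m := (k %/ nu)%N.
have nu_gt0 : (0 < nu)%N by lia.
have [W card_W] : exists W : {set V}, #|W| = m.
  by apply: exists_card_set; rewrite -(leq_pmul2r nu_gt0) (leq_trans (leq_divM _ _)) // mulnC.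
have k_le_2m_nu : k%:R <= 2 * m%:R * nu%:R :> R.
  rewrite -!natrM ler_nat.
  have m_gt0 : (0 < m)%N by rewrite divn_gt0.
  have := ltn_pmod k nu_gt0; have := divn_eq k nu; rewrite -/m.
  by move: (k %% nu)%N => r; nia.
rewrite !Phi_ext // in S'_approx.
have mass_ge0 : 0 <= expect E s P (fun _ => 1) by apply: expect_ge0.
apply: (approx_shift_le (m := m%:R) eps_gt0 _ mass_ge0 _ _ _ _ S'_approx);
  rewrite ?Phi_ge0 //.
- have nu_pos : 0 < nu%:R :> R by rewrite ltr0n.
  rewrite ler_pdivrMr // in eps_k; nra.
- have W_feasible := feasible_block le_nu_mu (eq_leq card_W).
  by apply: le_trans (Sopt_opt _ W_feasible); rewrite -card_W Phi_block_ge.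
have := Sopt'_opt (fun i => Some @: Sopt i).
by rewrite feasible_Some !Phi_ext // remove_new_Some; apply.
Qed.
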